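(* Let $G=(V,E)$ be a connected graph with $|E|=\Omega(|V|^2)$. Then $Z_c(G)=\Theta(|V|)$. That is, for every constant $c>0$ there is a constant $c'>0$ such that every connected graph $G=(V,E)$ with $|E|\geq c|V|^2$ satisfies $Z_c(G)\geq c'|V|$ (and trivially $Z_c(G)\leq |V|$).
   Context: Zero forcing: given a graph $G$ and a set $S$ of initially colored vertices, if a colored vertex $u$ has exactly one uncolored neighbor $v$, then $v$ becomes colored. $S$ is a zero forcing set if repeated application colors all vertices. A connected forcing set is a zero forcing set $S$ such that the induced subgraph $G[S]$ is connected; $Z_c(G)$, the connected forcing number, is the minimum cardinality of a connected forcing set (defined for connected graphs, since disconnected graphs have no connected forcing set). The asymptotic notation refers to families of graphs whose number of vertices tends to infinity. *)

From HB Require Import structures.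
From mathcomp Require Import all_boot all_order all_algebra.
From mathcomp Require Export reals.
Set Implicit Arguments. Unset Strict Implicit. Unset Printing Implicit Defensive.

(* A finite simple graph on vertex type T is a symmetric irreflexive relation e. *)

Definition connected_graph (T : finType) (e : rel T) : Prop :=
  (0 < #|T|)%N /\ forall x y : T, connect e x y.

(* Number of (undirected) edges times 2 = number of ordered adjacent pairs. *)
Definition num_arcs (T : finType) (e : rel T) : nat :=
  #|[set p : T * T | e p.1 p.2]|.

Definition force_step (T : finType) (e : rel T) (S : {set T}) : {set T} :=
  S :|: [set v | [exists u, [&& u \in S, e u v, v \notin S &
                  [forall w, (e u w && (w \notin S)) ==> (w == v)]]]].

(* Final colored set: after #|T| rounds the process has stabilised. *)
Definition force_closure (T : finType) (e : rel T) (S : {set T}) : {set T} :=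
  iter #|T| (force_step e) S.

Definition zero_forcing_set (T : finType) (e : rel T) (S : {set T}) : bool :=
  force_closure e S == setT.

Definition induced_connected (T : finType) (e : rel T) (S : {set T}) : bool :=
  [forall x in S, forall y in S,
     connect [rel a b | [&& e a b, a \in S & b \in S]] x y].

Definition connected_forcing_set (T : finType) (e : rel T) (S : {set T}) : bool :=
  zero_forcing_set e S && induced_connected e S.

(* Connected forcing number: minimum cardinality of a connected forcing set
   (for connected graphs, setT is one, so the default #|T| is never spurious). *)
Definition Zc (T : finType) (e : rel T) : nat :=
  \big[minn/#|T|]_(S : {set T} | connected_forcing_set e S) #|S|.

From mathcomp Require Import all_boot all_order all_algebra.
From mathcomp Require Import reals.
From mathcomp Require Import ring lra.
Set Implicit Arguments. Unset Strict Implicit. Unset Printing Implicit Defensive.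

(* Every zero forcing set S satisfies [num_arcs e <= 4 * #|S| * #|T|].
   Call a colored vertex active if it still has an uncolored neighbor.  A
   vertex forces at most one neighbor per round and is inactive afterwards,
   so the number of active vertices never grows: it stays at most #|S|.
   Hence, if y is colored in round k+1, its neighbors colored no later than y
   are either active after round k or newly colored in round k+1, at most
   2 #|S| of them.  Orienting every edge from the earlier colored endpoint
   gives num_arcs e <= 2 * #|T| * 2 #|S|.  With num_arcs e >= 2 c #|T|^2 this
   yields Zc e >= c/2 * #|T|. *)

Section ForceStep.
Variables (T : finType) (e : rel T).
Implicit Types (C : {set T}) (u v x y : T).

Definition active C : {set T} := [set u in C | [exists w, e u w && (w \notin C)]].

Definition forces C u v : bool :=
  [&& u \in C, e u v, v \notin C & [forall w, (e u w && (w \notin C)) ==> (w == v)]].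

Lemma forces_inj C u v1 v2 : forces C u v1 -> forces C u v2 -> v1 = v2.
Proof.
case/and4P=> _ _ _ /forallP only_v1; case/and4P=> _ euv2 v2C _.
by have := only_v1 v2; rewrite euv2 v2C => /eqP.
Qed.

Lemma forces_active C u v : forces C u v -> u \in active C.
Proof.
by case/and4P=> uC euv vC _; rewrite inE uC; apply/existsP; exists v; rewrite euv.
Qed.

Lemma forces_inactive_step C u v :
  v \in force_step e C -> forces C u v -> u \notin active (force_step e C).
Proof.
move=> vC' /and4P[_ _ _ /forallP only_v]; rewrite inE.
apply/negP=> /andP[_ /existsP[w /andP[euw wC']]].
have wC : w \notin C by apply: contra wC'; apply/subsetP/subsetUl.
by have := only_v w; rewrite euw wC => /eqP wv; rewrite wv vC' in wC'.
Qed.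

Lemma exists_forcer C v : v \in force_step e C :\: C -> exists u, forces C u v.
Proof.
case/setDP; rewrite inE => /orP[-> //|]; rewrite inE => /existsP[u fuv] _.
by exists u.
Qed.

Definition forcer C v : T := odflt v [pick u | forces C u v].

Lemma forcerP C v : v \in force_step e C :\: C -> forces C (forcer C v) v.
Proof.
by case/exists_forcer=> u fuv; rewrite /forcer; case: pickP => [//|/(_ u)]; rewrite fuv.
Qed.

Lemma card_new_le_active C : #|force_step e C :\: C| <= #|active C|.
Proof.
rewrite -(card_in_imset (f := forcer C)).
  apply/subset_leq_card/subsetP=> _ /imsetP[v vnew ->].
  exact: forces_active (forcerP vnew).
move=> v1 v2 v1new v2new eqf; apply: forces_inj (forcerP v1new) _.
by rewrite eqf; apply: forcerP.
Qed.

(* Old active vertices stay put, new ones are sent to their forcer, which was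
   active before the step and is not active after it. *)
Lemma card_active_step C : #|active (force_step e C)| <= #|active C|.
Proof.
pose h x := if x \in C then x else forcer C x.
have new x : x \in force_step e C -> x \notin C -> x \in force_step e C :\: C.
  by move=> xC' xC; rewrite inE xC xC'.
have stepC x : x \in active (force_step e C) -> x \in force_step e C.
  by rewrite inE => /andP[].
rewrite -(card_in_imset (f := h)).
  apply/subset_leq_card/subsetP=> _ /imsetP[v vA ->].
  move: (vA); rewrite inE => /andP[vC' /existsP[w /andP[evw wC']]].
  rewrite /h; case: ifPn => vC; last exact: forces_active (forcerP (new _ vC' vC)).
  rewrite inE vC; apply/existsP; exists w; rewrite evw.
  by apply: contra wC'; apply/subsetP/subsetUl.
move=> x y /[dup] xA /stepC xC' /[dup] yA /stepC yC'; rewrite /h.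
case: ifPn => xC; case: ifPn => yC // eqh.
- by have := forces_inactive_step yC' (forcerP (new _ yC' yC)); rewrite -eqh xA.
- by have := forces_inactive_step xC' (forcerP (new _ xC' xC)); rewrite eqh yA.
- apply: forces_inj (forcerP (new _ xC' xC)) _.
  by rewrite eqh; apply: forcerP (new _ yC' yC).
Qed.

End ForceStep.

Section ColoringTime.
Variables (T : finType) (e : rel T) (S : {set T}).

Local Notation colored r := (iter r (force_step e) S).

Lemma colored_mono r s : r <= s -> colored r \subset colored s.
Proof.
move/subnK <-; elim: (s - r) => [|k IH]; first by rewrite add0n.
by rewrite addSn; apply: subset_trans IH _; apply/subsetUl.
Qed.

Lemma card_active_iter r : #|active e (colored r)| <= #|S|.
Proof.
elim: r => [|r IH]; last exact: leq_trans (card_active_step _ _) IH.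
by apply/subset_leq_card/subsetP=> x; rewrite inE => /andP[].
Qed.

Hypothesis zfS : zero_forcing_set e S.

Lemma exists_coloring_round y : exists r, y \in colored r.
Proof. by exists #|T|; move/eqP: zfS; rewrite /force_closure => ->; rewrite inE. Qed.

Definition time (y : T) : nat := ex_minn (exists_coloring_round y).

Lemma colored_time y : y \in colored (time y).
Proof. by rewrite /time; case: ex_minnP. Qed.

Lemma time_min y r : y \in colored r -> time y <= r.
Proof. by rewrite /time; case: ex_minnP => m _ /[apply]. Qed.

Lemma card_earlier_nbrs y : #|[set x | e x y && (time x <= time y)]| <= 2 * #|S|.
Proof.
case Ey: (time y) => [|k].
  rewrite mul2n -addnn; apply: leq_trans (leq_addr _ _).
  apply/subset_leq_card/subsetP=> x; rewrite inE leqn0 => /andP[_ /eqP tx].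
  by have := colored_time x; rewrite tx.
have yk : y \notin colored k by apply/negP=> /time_min; rewrite Ey ltnn.
apply: (@leq_trans #|active e (colored k) :|: (colored k.+1 :\: colored k)|).
  apply/subset_leq_card/subsetP=> x; rewrite inE => /andP[exy tx].
  have xk1 : x \in colored k.+1 by apply: subsetP (colored_mono tx) _ (colored_time x).
  rewrite in_setU in_setD xk1 andbT orbC; case xk: (x \in colored k) => //=.
  by rewrite inE xk; apply/existsP; exists y; rewrite exy.
rewrite mul2n -addnn; apply: leq_trans (leq_card_setU _ _) (leq_add _ _).
  exact: card_active_iter.
exact: leq_trans (card_new_le_active _ _) (card_active_iter _).
Qed.

Definition earlier_arcs : {set T * T} :=
  [set p | e p.1 p.2 && (time p.1 <= time p.2)].

Lemma card_earlier_arcs : #|earlier_arcs| <= 2 * #|S| * #|T|.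
Proof.
have -> : #|earlier_arcs| = \sum_y #|[set x | e x y && (time x <= time y)]|.
  under eq_bigr => y _ do rewrite -sum1_card big_mkcond.
  rewrite exchange_big pair_big -sum1_card big_mkcond.
  by apply: eq_bigr => -[x y] _; rewrite !inE.
rewrite mulnC -sum_nat_const; exact: leq_sum (fun y _ => card_earlier_nbrs y).
Qed.

Lemma num_arcs_le_forcing : symmetric e -> num_arcs e <= 4 * #|S| * #|T|.
Proof.
move=> esym; pose swap (p : T * T) := (p.2, p.1).
have swap_inj : injective swap by apply: (can_inj (g := swap)); case.
have cover : [set p | e p.1 p.2] \subset earlier_arcs :|: swap @^-1: earlier_arcs.
  apply/subsetP=> -[x y]; rewrite !inE /= (esym y x) => ->.
  exact: leq_total.
apply: leq_trans (subset_leq_card cover) _.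
apply: leq_trans (leq_card_setU _ _) _.
rewrite card_preimset // addnn -mul2n (_ : 4 = 2 * 2) // -!mulnA leq_mul2l mulnA.
by rewrite card_earlier_arcs orbT.
Qed.

End ColoringTime.

Lemma zero_forcing_setT (T : finType) (e : rel T) : zero_forcing_set e setT.
Proof.
rewrite /zero_forcing_set /force_closure; elim: #|T| => [//|k IH] /=.
by rewrite (eqP IH) /force_step setTU.
Qed.

Lemma Zc_le_card (T : finType) (e : rel T) : (Zc e <= #|T|)%N.
Proof.
apply: (big_ind (fun m => m <= #|T|)) => // [m n mT _|S _]; last exact: max_card.
by rewrite geq_min mT.
Qed.

Lemma num_arcs_le_Zc (T : finType) (e : rel T) :
  symmetric e -> num_arcs e <= 4 * Zc e * #|T|.
Proof.
move=> esym; apply: (big_ind (fun m => num_arcs e <= 4 * m * #|T|)).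
- by rewrite -{1}cardsT; apply: num_arcs_le_forcing (zero_forcing_setT e) esym.
- by move=> m n; rewrite /minn; case: ifP.
- by move=> S /andP[zfS _]; apply: num_arcs_le_forcing.
Qed.

Import Order.TTheory GRing.Theory Num.Theory.
Local Open Scope ring_scope.

Theorem theorem1 (R : realType) (c : R) (hc : 0 < c) :
  exists c' : R, 0 < c' /\
    forall (T : finType) (e : rel T),
      symmetric e -> irreflexive e -> connected_graph e ->
      c * (#|T|%:R) ^+ 2 <= (num_arcs e)%:R / 2 ->
      c' * #|T|%:R <= (Zc e)%:R /\ (Zc e <= #|T|)%N.
Proof.
exists (c / 2); split; first by rewrite divr_gt0.
move=> T e esym _ [T_gt0 _] dense; split; last exact: Zc_le_card.
have arcs : (num_arcs e)%:R <= 4 * (Zc e)%:R * #|T|%:R :> R.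
  by rewrite -!natrM ler_nat num_arcs_le_Zc.
have n_gt0 : 0 < #|T|%:R :> R by rewrite ltr0n.
rewrite -(ler_pM2r n_gt0); set n := #|T|%:R in dense arcs n_gt0 *.
set z := (Zc e)%:R in arcs *.
have -> : c / 2 * n * n = c * n ^+ 2 / 2 by rewrite expr2; ring.
lra.
Qed.
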